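(* (1) If $A,B\in\mathcal A_n$ with $A\le B$ in ASM order, then there is a directed path $A=A_0\to A_1\to\cdots\to A_k=B$ in the ASM graph with $\beta(A_i)-\beta(A_{i-1})=1$ for all $i$. (2) For every $A\in\mathcal A_n$, $\beta(A)=\#\{B\in\mathcal A_n : B\le A \text{ and } B \text{ is a bigrassmannian permutation}\}$.
   Context: An $n\times n$ matrix $A=(a_{ij})$ is an alternating sign matrix (ASM) if all $a_{ij}\in\{-1,0,1\}$, all partial row and column sums lie in $\{0,1\}$, and all full row and column sums equal $1$; $\mathcal A_n$ is the set of these, and permutations are identified with permutation matrices. Corner sum matrix $\widetilde A(i,j)=\sum_{p\le i,q\le j}a_{pq}$ ($=0$ if $i=0$ or $j=0$). ASM order: $A\le B$ iff $\widetilde A(i,j)\ge\widetilde B(i,j)$ for all $i,j$. Bigrassmannian statistic: $\beta(A)=\sum_{i,j=1}^n\min(i,j)-\sum_{i,j=1}^n\widetilde A(i,j)$. A permutation $w$ is bigrassmannian if there is exactly one $i\in[n-1]$ with $w^{-1}(i)>w^{-1}(i+1)$ and exactly one $j\in[n-1]$ with $w(j)>w(j+1)$. For $i<j$, $k<l$, $R_{ij}^{kl}=\{(p,q): i\le p<j,\ k\le q<l\}$, $\widetilde R_{ij}^{kl}$ its $0/1$ indicator matrix; $E(A)$: rectangles with, for all $(p,q)\in R_{ij}^{kl}$, $\widetilde A(p,k)=\widetilde A(p,k-1)$, $\widetilde A(p,l)=\widetilde A(p,l-1)+1$, $\widetilde A(i,q)=\widetilde A(i-1,q)$, $\widetilde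 A(j,q)=\widetilde A(j-1,q)+1$; $E^*(A)$: rectangles with $\widetilde A(p,k)=\widetilde A(p,k-1)+1$, $\widetilde A(p,l)=\widetilde A(p,l-1)$, $\widetilde A(i,q)=\widetilde A(i-1,q)+1$, $\widetilde A(j,q)=\widetilde A(j-1,q)$. $r_{ij}^{kl}(A)$ is the ASM with corner sum matrix $\widetilde A+\widetilde R_{ij}^{kl}$ if $R_{ij}^{kl}\in E(A)$, $\widetilde A-\widetilde R_{ij}^{kl}$ if $R_{ij}^{kl}\in E^*(A)$, $\widetilde A$ otherwise. ASM graph edge $A\to B$: $B=r_{ij}^{kl}(A)$ for some $i<j$, $k<l$, and $\beta(A)<\beta(B)$. *)

From HB Require Import structures.
From mathcomp Require Import all_boot all_order all_algebra all_fingroup.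
Set Implicit Arguments. Unset Strict Implicit. Unset Printing Implicit Defensive.
Import Order.TTheory GRing.Theory Num.Theory.
Local Open Scope ring_scope.

(* Matrices are n x n with integer entries; row/column index p : 'I_n stands
   for the paper's index p+1 (1-based). *)

(* corner sum  Ã(i,j) = sum_{p<=i, q<=j} a_pq  (1-based i,j; 0 if i=0 or j=0) *)
Definition csum (n : nat) (A : 'M[int]_n) (i j : nat) : int :=
  \sum_(p < n | (p < i)%N) \sum_(q < n | (q < j)%N) A p q.

Definition is_ASM (n : nat) (A : 'M[int]_n) : Prop :=
  (forall p q : 'I_n, A p q \in [:: -1; 0; 1]) /\
  (forall (p : 'I_n) (m : nat), (m <= n)%N ->
      \sum_(q < n | (q < m)%N) A p q \in [:: 0; 1]) /\
  (forall (q : 'I_n) (m : nat), (m <= n)%N ->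
      \sum_(p < n | (p < m)%N) A p q \in [:: 0; 1]) /\
  (forall p : 'I_n, \sum_(q < n) A p q = 1) /\
  (forall q : 'I_n, \sum_(p < n) A p q = 1).

Definition asm_le (n : nat) (A B : 'M[int]_n) : bool :=
  [forall i : 'I_n.+1, forall j : 'I_n.+1, csum B i j <= csum A i j].

Definition beta (n : nat) (A : 'M[int]_n) : int :=
  \sum_(i < n) \sum_(j < n) (minn i.+1 j.+1)%:Z
  - \sum_(i < n) \sum_(j < n) csum A i.+1 j.+1.

Definition ndes (n : nat) (w : 'S_n) : nat :=
  #|[set j : 'I_n | [exists j' : 'I_n, (j' == j.+1 :> nat) && (w j' < w j)%N]]|.

Definition bigrassmannian (n : nat) (w : 'S_n) : bool :=
  (ndes w == 1%N) && (ndes w^-1 == 1%N).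

(* indicator of rectangle R_ij^kl = {(p,q) : i<=p<j, k<=q<l} (1-based) *)
Definition rect_ind (i j k l p q : nat) : int :=
  ((i <= p < j)%N && (k <= q < l)%N)%:R.

Definition inE_rect (n : nat) (A : 'M[int]_n) (i j k l : nat) : Prop :=
  forall p q : nat, (i <= p < j)%N -> (k <= q < l)%N ->
    [/\ csum A p k = csum A p k.-1,
        csum A p l = csum A p l.-1 + 1,
        csum A i q = csum A i.-1 q &
        csum A j q = csum A j.-1 q + 1].

Definition inEstar_rect (n : nat) (A : 'M[int]_n) (i j k l : nat) : Prop :=
  forall p q : nat, (i <= p < j)%N -> (k <= q < l)%N ->
    [/\ csum A p k = csum A p k.-1 + 1,
        csum A p l = csum A p l.-1,
        csum A i q = csum A i.-1 q + 1 &
        csum A j q = csum A j.-1 q].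

(* B = r_ij^kl(A): B's corner sum matrix is the prescribed one (a matrix is
   determined by its corner sum matrix). *)
Definition is_r (n : nat) (A B : 'M[int]_n) (i j k l : nat) : Prop :=
  forall p q : nat, (p <= n)%N -> (q <= n)%N ->
    [/\ inE_rect A i j k l -> csum B p q = csum A p q + rect_ind i j k l p q,
        ~ inE_rect A i j k l -> inEstar_rect A i j k l ->
          csum B p q = csum A p q - rect_ind i j k l p q &
        ~ inE_rect A i j k l -> ~ inEstar_rect A i j k l ->
          csum B p q = csum A p q].

Definition asm_edge (n : nat) (A B : 'M[int]_n) : Prop :=
  is_ASM A /\ is_ASM B /\
  (exists i j k l : nat,
     [/\ (0 < i < j)%N, (j <= n)%N, (0 < k < l)%N, (l <= n)%N &
         is_r A B i j k l]) /\
  beta A < beta B.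

From HB Require Import structures.
From mathcomp Require Import all_boot all_order all_algebra all_fingroup.
From mathcomp Require Import zify ring.
Import Order.TTheory GRing.Theory Num.Theory.
Local Open Scope ring_scope.
Set Implicit Arguments. Unset Strict Implicit. Unset Printing Implicit Defensive.

(* An ASM is encoded by its corner-sum function C = csum A, which is zero on
   the axes, grows by 0 or 1 along rows and columns and equals the index on
   the outer borders (corner_fun); conversely every such function is the
   corner-sum function of an ASM (matC).

   (1) If A <= B then csum B <= csum A pointwise.  Among the cells where the
   inequality is strict, one maximizing 2 C(i, j) - (i + j) is a removable
   corner of C = csum A (exists_corner); lowering C there by one is the move
   r_{p,p+1}^{q,q+1} for a 1 x 1 rectangle of E*(A), an edge of the ASM graph
   that raises beta by one (asm_edge_remove_corner, beta_remove_corner).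
   Induction on the total gap between csum A and csum B gives the chain.

   (2) The bigrassmannian permutations are exactly the bigr_perm n x y a for
   admissible (x, y, a) (bigr_perm_bigr, bigr_perm_surj, bigr_perm_inj), and
   bigr_perm n x y a <= A iff csum A (x + 1, y + 1) <= a (bigr_perm_le).  For
   fixed (x, y) there are min(x + 1, y + 1) - csum A (x + 1, y + 1) such a,
   and summing over (x, y) gives beta A. *)

Lemma in01P (x : int) : x \in [:: 0; 1] <-> x = 0 \/ x = 1.
Proof. by rewrite !inE; split => [/orP[]/eqP|[]->]; auto; rewrite eqxx ?orbT. Qed.

Lemma in3P (x : int) : x \in [:: -1; 0; 1] <-> [\/ x = -1, x = 0 | x = 1].
Proof.
rewrite !inE; split.
  by case/orP=> [/eqP->|/orP[]/eqP->]; [apply: Or31|apply: Or32|apply: Or33].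
by case=> ->; rewrite eqxx ?orbT.
Qed.

Lemma sum_prefixS (V : nmodType) n (i : 'I_n) (f : 'I_n -> V) :
  \sum_(q < n | (q < i.+1)%N) f q = \sum_(q < n | (q < i)%N) f q + f i.
Proof.
rewrite (bigD1 i) /= ?ltnSn // addrC; congr (_ + _).
by apply: eq_bigl => q; rewrite ltnS -val_eqE /= ltn_neqAle andbC.
Qed.

Lemma sum_prefix_full (V : nmodType) n m (f : 'I_n -> V) : (n <= m)%N ->
  \sum_(q < n | (q < m)%N) f q = \sum_(q < n) f q.
Proof. by move=> h; apply: eq_bigl => q; rewrite (leq_trans (ltn_ord q) h). Qed.

Lemma csum0l n (A : 'M[int]_n) j : csum A 0 j = 0.
Proof. by rewrite /csum big_pred0 // => p; rewrite ltn0. Qed.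

Lemma csum0r n (A : 'M[int]_n) i : csum A i 0 = 0.
Proof. by rewrite /csum big1 // => p _; rewrite big_pred0 // => q; rewrite ltn0. Qed.

Lemma csum_rowS n (A : 'M[int]_n) (i : 'I_n) j :
  csum A i.+1 j = csum A i j + \sum_(q < n | (q < j)%N) A i q.
Proof. by rewrite /csum sum_prefixS. Qed.

Lemma csum_colS n (A : 'M[int]_n) i (j : 'I_n) :
  csum A i j.+1 = csum A i j + \sum_(p < n | (p < i)%N) A p j.
Proof. by rewrite /csum -big_split /=; apply: eq_bigr => p _; rewrite sum_prefixS. Qed.

Lemma csum_entry n (A : 'M[int]_n) (p q : 'I_n) :
  A p q = csum A p.+1 q.+1 - csum A p q.+1 - csum A p.+1 q + csum A p q.
Proof. by rewrite !csum_rowS sum_prefixS; ring. Qed.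

Lemma csum_inj n (A B : 'M[int]_n) :
  (forall i j, (i <= n)%N -> (j <= n)%N -> csum A i j = csum B i j) -> A = B.
Proof.
move=> h; apply/matrixP => p q; rewrite !csum_entry !h //;
  by [apply: ltnW | apply: ltn_ord].
Qed.

Definition matC n (C : nat -> nat -> int) : 'M[int]_n :=
  \matrix_(p < n, q < n) (C p.+1 q.+1 - C p q.+1 - C p.+1 q + C p q).

Lemma row_prefix_matC n (C : nat -> nat -> int) (p : 'I_n) j :
  (forall i, C i 0%N = 0) -> (j <= n)%N ->
  \sum_(q < n | (q < j)%N) matC n C p q = C p.+1 j - C p j.
Proof.
move=> C0; elim: j => [|j IH] hj.
  by rewrite big_pred0 // ?C0 ?subr0 // => q; rewrite ltn0.
by rewrite (sum_prefixS (Ordinal hj)) IH ?mxE /=; [ring | apply: ltnW].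
Qed.

Lemma csum_matC n (C : nat -> nat -> int) :
  (forall j, C 0%N j = 0) -> (forall i, C i 0%N = 0) ->
  forall i j, (i <= n)%N -> (j <= n)%N -> csum (matC n C) i j = C i j.
Proof.
move=> C0l C0r; elim=> [|i IH] j hi hj; first by rewrite csum0l C0l.
rewrite (csum_rowS _ (Ordinal hi)) IH ?row_prefix_matC //; [ring | exact: ltnW].
Qed.

Definition corner_fun n (C : nat -> nat -> int) :=
 [/\ (forall j, C 0%N j = 0), (forall i, C i 0%N = 0),
     (forall i j, (i < n)%N -> (j <= n)%N -> C i.+1 j = C i j \/ C i.+1 j = C i j + 1),
     (forall i j, (i <= n)%N -> (j < n)%N -> C i j.+1 = C i j \/ C i j.+1 = C i j + 1) &
     (forall k, (k <= n)%N -> C n k = k%:Z /\ C k n = k%:Z)].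

Lemma csum_corner_fun n (A : 'M[int]_n) : is_ASM A -> corner_fun n (csum A).
Proof.
move=> [_ [rows [cols [rowsum colsum]]]].
have rS i j (hi : (i < n)%N) : (j <= n)%N ->
    csum A i.+1 j = csum A i j \/ csum A i.+1 j = csum A i j + 1.
  move=> hj; rewrite (csum_rowS _ (Ordinal hi)).
  by case/in01P: (rows (Ordinal hi) j hj) => ->; [left; rewrite addr0|right].
have cS i j (hj : (j < n)%N) : (i <= n)%N ->
    csum A i j.+1 = csum A i j \/ csum A i j.+1 = csum A i j + 1.
  move=> hi; rewrite (csum_colS _ _ (Ordinal hj)).
  by case/in01P: (cols (Ordinal hj) i hi) => ->; [left; rewrite addr0|right].
split; [exact: csum0l | exact: csum0r | by move=> i j hi; apply: rS |
       by move=> i j hi hj; apply: cS |].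
elim=> [|k IH] hk; first by rewrite csum0l csum0r.
have [IH1 IH2] := IH (ltnW hk).
rewrite (csum_colS _ _ (Ordinal hk)) (csum_rowS _ (Ordinal hk)) !sum_prefix_full //.
by rewrite colsum rowsum IH1 IH2 -[k.+1]addn1 PoszD.
Qed.

Lemma corner_fun_ASM n C : corner_fun n C -> is_ASM (matC n C).
Proof.
move=> [C0l C0r rS cS bd].
have cs := csum_matC C0l C0r.
have col_prefix (q : 'I_n) m : (m <= n)%N ->
    \sum_(p < n | (p < m)%N) matC n C p q = C m q.+1 - C m q.
  move=> hm; have := csum_colS (matC n C) m q.
  by rewrite !cs // ?ltn_ord 1?ltnW // => ->; ring.
split.
  move=> p q; rewrite mxE; apply/in3P.
  have hp := ltn_ord p; have hq := ltn_ord q.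
  move: (rS p q.+1 hp hq) (rS p q hp (ltnW hq)).
  move: (C p.+1 q.+1) (C p q.+1) (C p.+1 q) (C p q) => a b c d.
  by case=> ->; case=> ->; [apply: Or32 | apply: Or31 | apply: Or33 | apply: Or32];
    ring.
split.
  move=> p m hm; rewrite row_prefix_matC //; apply/in01P.
  by case: (rS p m (ltn_ord p) hm) => ->; [left|right]; ring.
split.
  move=> q m hm; rewrite col_prefix //; apply/in01P.
  by case: (cS m q hm (ltn_ord q)) => ->; [left|right]; ring.
split=> [p|q]; rewrite -(sum_prefix_full _ (leqnn n)).
  rewrite row_prefix_matC // (proj2 (bd _ (ltn_ord p))) (proj2 (bd _ (ltnW (ltn_ord p)))).
  by rewrite -[p.+1]addn1 PoszD; ring.
rewrite col_prefix // (proj1 (bd _ (ltn_ord q))) (proj1 (bd _ (ltnW (ltn_ord q)))).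
by rewrite -[q.+1]addn1 PoszD; ring.
Qed.

(* Corner-sum functions are invariant under transposition, which lets us
   prove row statements only. *)
Lemma corner_fun_tr n C : corner_fun n C -> corner_fun n (fun i j => C j i).
Proof.
case=> C0l C0r rS cS bd; split=> // [i j hi hj|i j hi hj|k /bd[]//].
  exact: cS.
exact: rS.
Qed.

Lemma corner_fun_row_lip n C i k j : corner_fun n C -> (i + k <= n)%N -> (j <= n)%N ->
  C i j <= C (i + k)%N j <= C i j + k%:Z.
Proof.
case=> _ _ rS _ _; elim: k => [|k IH] h hj; first by rewrite addn0; lia.
have h' : (i + k < n)%N by rewrite addnS in h.
have := IH (ltnW h') hj; rewrite addnS.
by case: (rS _ _ h' hj) => ->; rewrite -[k.+1]addn1 PoszD; lia.
Qed.

Lemma corner_fun_col_lip n C i j k : corner_fun n C -> (i <= n)%N -> (j + k <= n)%N ->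
  C i j <= C i (j + k)%N <= C i j + k%:Z.
Proof. by move=> /corner_fun_tr vC hi hjk; apply: (corner_fun_row_lip vC). Qed.

Lemma corner_fun_bounds n C i j : corner_fun n C -> (i <= n)%N -> (j <= n)%N ->
  [/\ 0 <= C i j, C i j <= i%:Z, C i j <= j%:Z & (i + j)%:Z - n%:Z <= C i j].
Proof.
move=> vC hi hj; have [C0l C0r _ _ bd] := vC.
have /andP[h1 h2] := @corner_fun_row_lip n C 0%N i j vC hi hj.
have /andP[_ h3] := @corner_fun_col_lip n C i 0%N j vC hi hj.
have := @corner_fun_row_lip n C i (n - i) j vC; rewrite subnKC //.
move=> /(_ (leqnn n) hj) /andP[_]; rewrite (proj1 (bd _ hj)) => h4.
rewrite add0n C0l C0r add0r in h1 h2 h3; split => //.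
by move: h4; rewrite PoszD -subzn //; lia.
Qed.

Definition corner_at (C : nat -> nat -> int) p q :=
  [/\ C p.-1 q = C p q - 1, C p q.-1 = C p q - 1, C p.+1 q = C p q & C p q.+1 = C p q].

(* Among the cells where D < C, one maximizing 2 C i j - (i + j) lies strictly
   inside the grid and has a drop above it and a flat step below it: otherwise
   the neighbouring cell would still have D < C and a larger value. *)
Lemma max_gap_row n C D p q : corner_fun n C -> corner_fun n D ->
  (p <= n)%N -> (q <= n)%N -> D p q < C p q ->
  (forall i j, (i <= n)%N -> (j <= n)%N -> D i j < C i j ->
     2%:Z * C i j - (i + j)%N%:Z <= 2%:Z * C p q - (p + q)%N%:Z) ->
  [/\ (0 < p < n)%N, C p.-1 q = C p q - 1 & C p.+1 q = C p q].
Proof.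
move=> [C0l _ rS _ bd] [D0l _ rSD _ bdD] hp hq hpq pmax.
have p0 : (0 < p)%N by case: p hp hpq pmax => // _; rewrite C0l D0l ltxx.
have pn : (p < n)%N.
  rewrite ltn_neqAle hp andbT; apply/eqP=> epn; move: hpq.
  by rewrite epn (proj1 (bd _ hq)) (proj1 (bdD _ hq)) ltxx.
split; first by rewrite p0.
- case: p p0 hp hpq pmax pn => // p _ hp hpq pmax pn /=.
  case: (rS p q (ltnW pn) hq) => e; last by rewrite e; lia.
  have := pmax p q (ltnW hp) hq; rewrite -e.
  by have := rSD p q (ltnW pn) hq; lia.
- case: (rS p q pn hq) => e; first by [].
  have := pmax p.+1 q pn hq; rewrite e.
  by have := rSD p q pn hq; lia.
Qed.

Lemma exists_corner n C D i0 j0 : corner_fun n C -> corner_fun n D ->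
  (i0 <= n)%N -> (j0 <= n)%N -> D i0 j0 < C i0 j0 ->
  exists p q, [/\ (0 < p < n)%N, (0 < q < n)%N, D p q < C p q & corner_at C p q].
Proof.
move=> vC vD hi0 hj0 lt0.
pose P (t : 'I_n.+1 * 'I_n.+1) := D t.1 t.2 < C t.1 t.2.
pose f (t : 'I_n.+1 * 'I_n.+1) := 2%:Z * C t.1 t.2 - (t.1 + t.2)%N%:Z.
have P0 : P (inord i0, inord j0) by rewrite /P /= !inordK.
case: (arg_maxP f P0) => -[p q]; rewrite /P /= => lt pmax.
have {}pmax i j : (i <= n)%N -> (j <= n)%N -> D i j < C i j ->
    2%:Z * C i j - (i + j)%N%:Z <= 2%:Z * C p q - (p + q)%N%:Z.
  by move=> hi hj hij; have := pmax (inord i, inord j); rewrite /f /= !inordK //; apply.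
have [hp dropP flatP] := max_gap_row vC vD (ltn_ord p) (ltn_ord q) lt pmax.
have pmaxT i j : (i <= n)%N -> (j <= n)%N -> D j i < C j i ->
    2%:Z * C j i - (i + j)%N%:Z <= 2%:Z * C p q - (q + p)%N%:Z.
  by move=> hi hj hij; rewrite addnC [(q + p)%N]addnC; exact: pmax.
have [hq dropQ flatQ] :=
  max_gap_row (corner_fun_tr vC) (corner_fun_tr vD) (ltn_ord q) (ltn_ord p) lt pmaxT.
by exists p, q.
Qed.

Definition dec_at (C : nat -> nat -> int) p q : nat -> nat -> int :=
  fun i j => C i j - (if (i == p) && (j == q) then 1 else 0).

Lemma dec_corner_fun n C p q : corner_fun n C -> (0 < p < n)%N -> (0 < q < n)%N ->
  corner_at C p q -> corner_fun n (dec_at C p q).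
Proof.
move=> [C0l C0r rS cS bd] hp hq [dropP dropQ flatP flatQ]; rewrite /dec_at; split.
- by move=> j; rewrite C0l; case: ifP; lia.
- by move=> i; rewrite C0r; case: ifP; lia.
- move=> i j hi hj; have := rS i j hi hj.
  case: ifP => [/andP[/eqP ep /eqP eq]|_].
    by subst; move: dropP => /=; case: ifP; lia.
  by case: ifP => [/andP[/eqP ep /eqP eq]|_]; [subst; lia | lia].
- move=> i j hi hj; have := cS i j hi hj.
  case: ifP => [/andP[/eqP ep /eqP eq]|_].
    by subst; move: dropQ => /=; case: ifP; lia.
  by case: ifP => [/andP[/eqP ep /eqP eq]|_]; [subst; lia | lia].
- by move=> k hk; rewrite (proj1 (bd k hk)) (proj2 (bd k hk)); split; case: ifP; lia.
Qed.

Lemma sum_cell m p q : (p < m)%N -> (q < m)%N ->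
  \sum_(i < m) \sum_(j < m)
     (if (nat_of_ord i == p) && (nat_of_ord j == q) then 1 else 0 : int) = 1.
Proof.
move=> hp hq; rewrite (bigD1 (Ordinal hp)) //= [X in _ + X]big1; last first.
  move=> i ne; apply: big1 => j _.
  by have -> : (nat_of_ord i == p) = false by apply/negbTE; rewrite -val_eqE in ne.
rewrite eqxx /= addr0 (bigD1 (Ordinal hq)) //= eqxx [X in _ + X]big1 ?addr0 //.
move=> j ne.
by have -> : (nat_of_ord j == q) = false by apply/negbTE; rewrite -val_eqE in ne.
Qed.

Definition remove_corner n (A : 'M[int]_n) p q : 'M[int]_n := matC n (dec_at (csum A) p q).

Section RemoveCorner.
Variables (n : nat) (A : 'M[int]_n) (p q : nat).
Hypotheses (aA : is_ASM A) (hp : (0 < p < n)%N) (hq : (0 < q < n)%N)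
  (cA : corner_at (csum A) p q).

Lemma remove_corner_fun : corner_fun n (dec_at (csum A) p q).
Proof. exact: dec_corner_fun (csum_corner_fun aA) hp hq cA. Qed.

Lemma remove_corner_ASM : is_ASM (remove_corner A p q).
Proof. exact: corner_fun_ASM remove_corner_fun. Qed.

Lemma csum_remove_corner i j : (i <= n)%N -> (j <= n)%N ->
  csum (remove_corner A p q) i j = dec_at (csum A) p q i j.
Proof. by case: remove_corner_fun => C0l C0r _ _ _; exact: csum_matC. Qed.

Lemma beta_remove_corner : beta (remove_corner A p q) = beta A + 1.
Proof.
have [p' ep] : exists p', p = p'.+1 by case: (p) hp => // p' _; exists p'.
have [q' eq] : exists q', q = q'.+1 by case: (q) hq => // q' _; exists q'.
have hp' : (p' < n)%N by move: hp; rewrite ep => /andP[_ /ltnW].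
have hq' : (q' < n)%N by move: hq; rewrite eq => /andP[_ /ltnW].
have sumA' : \sum_(i < n) \sum_(j < n) csum (remove_corner A p q) i.+1 j.+1 =
    \sum_(i < n) \sum_(j < n) csum A i.+1 j.+1 - 1.
  rewrite -(sum_cell hp' hq') -sumrB; apply: eq_bigr => i _.
  rewrite -sumrB; apply: eq_bigr => j _.
  by rewrite csum_remove_corner ?ltn_ord // /dec_at ep eq !eqSS.
by rewrite /beta sumA'; ring.
Qed.

(* In the language of rectangles, a removable corner is a 1 x 1 rectangle
   R_{p,p+1}^{q,q+1} of E*(A) (and not of E(A)), so removing it is the move
   r_{p,p+1}^{q,q+1}. *)
Lemma corner_not_inE : ~ inE_rect A p p.+1 q q.+1.
Proof.
move=> /(_ p q); rewrite !leqnn => /(_ isT isT) [hk _ _ _].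
by case: cA => _ dropQ _ _; move: hk; rewrite dropQ; lia.
Qed.

Lemma corner_inEstar : inEstar_rect A p p.+1 q q.+1.
Proof.
case: cA => dropP dropQ flatP flatQ => p1 q1 h1 h2.
have -> : p1 = p by lia.
have -> : q1 = q by lia.
by split; rewrite /= ?dropP ?dropQ ?flatP ?flatQ //; ring.
Qed.

Lemma is_r_remove_corner : is_r A (remove_corner A p q) p p.+1 q q.+1.
Proof.
move=> p0 q0 hp0 hq0; split=> [/corner_not_inE [] | _ _ | _ []]; last first.
  exact: corner_inEstar.
rewrite csum_remove_corner // /dec_at /rect_ind.
have -> : (p <= p0 < p.+1)%N = (p0 == p) by rewrite ltnS -eqn_leq eq_sym.
have -> : (q <= q0 < q.+1)%N = (q0 == q) by rewrite ltnS -eqn_leq eq_sym.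
by case: (_ && _).
Qed.

Lemma asm_edge_remove_corner : asm_edge A (remove_corner A p q).
Proof.
split; first exact: aA.
split; first exact: remove_corner_ASM.
split; last by rewrite beta_remove_corner ltrDl.
case/andP: hp => hp1 hp2; case/andP: hq => hq1 hq2.
exists p, p.+1, q, q.+1; split=> //; [by rewrite hp1 ltnSn | by rewrite hq1 ltnSn |].
exact: is_r_remove_corner.
Qed.
End RemoveCorner.

Definition csum_below n (A B : 'M[int]_n) :=
  forall i j, (i <= n)%N -> (j <= n)%N -> csum A i j <= csum B i j.

Lemma asm_leP n (A B : 'M[int]_n) : asm_le A B <-> csum_below B A.
Proof.
split=> [/forallP H i j hi hj | H].
  by have /forallP := H (inord i) => /(_ (inord j)); rewrite !inordK.
by apply/forallP => i; apply/forallP => j; apply: H; rewrite -ltnS ltn_ord.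
Qed.

Definition csum_gap n (A B : 'M[int]_n) : int :=
  \sum_(i < n.+1) \sum_(j < n.+1) (csum A i j - csum B i j).

Lemma csum_gap_ge0 n (A B : 'M[int]_n) : csum_below B A -> 0 <= csum_gap A B.
Proof.
move=> le; apply: sumr_ge0 => i _; apply: sumr_ge0 => j _.
by rewrite subr_ge0 le // -ltnS ltn_ord.
Qed.

Lemma eq_or_strict_cell n (A B : 'M[int]_n) : csum_below B A ->
  A = B \/ exists i j, [/\ (i <= n)%N, (j <= n)%N & csum B i j < csum A i j].
Proof.
move=> le; case: (boolP [exists i : 'I_n.+1, exists j : 'I_n.+1,
    csum B i j < csum A i j]) => [/existsP[i /existsP[j lt]] | none].
  by right; exists i, j; split; rewrite // -ltnS ltn_ord.
left; apply: csum_inj => i j hi hj; apply/eqP; rewrite eq_le le // andbT.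
rewrite leNgt; apply/negP => lt; move/negP: none; apply.
by apply/existsP; exists (inord i); apply/existsP; exists (inord j); rewrite !inordK.
Qed.

Lemma remove_corner_below n (A B : 'M[int]_n) p q :
  is_ASM A -> (0 < p < n)%N -> (0 < q < n)%N -> corner_at (csum A) p q ->
  csum B p q < csum A p q -> csum_below B A ->
  csum_below B (remove_corner A p q) /\
  csum_gap (remove_corner A p q) B = csum_gap A B - 1.
Proof.
move=> aA hp hq cA lt le; split.
  move=> i j hi hj; rewrite csum_remove_corner // /dec_at.
  case: ifP => [/andP[/eqP-> /eqP->]|_]; first by rewrite lerBrDr lezD1.
  by rewrite subr0; exact: le.
have hp' : (p < n.+1)%N by case/andP: hp => _ /ltnW.
have hq' : (q < n.+1)%N by case/andP: hq => _ /ltnW.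
rewrite -(sum_cell hp' hq').
rewrite -sumrB; apply: eq_bigr => i _; rewrite -sumrB; apply: eq_bigr => j _.
have hi : (i <= n)%N by rewrite -ltnS.
have hj : (j <= n)%N by rewrite -ltnS.
by rewrite csum_remove_corner // /dec_at addrAC.
Qed.

Definition saturated_path n (A B : 'M[int]_n) : Prop :=
  exists (k : nat) (P : nat -> 'M[int]_n),
    [/\ P 0%N = A, P k = B &
        forall m : nat, (m < k)%N ->
          asm_edge (P m) (P m.+1) /\ beta (P m.+1) - beta (P m) = 1].

Lemma saturated_path_refl n (A : 'M[int]_n) : saturated_path A A.
Proof. by exists 0%N, (fun _ => A). Qed.

Lemma saturated_path_cons n (A A' B : 'M[int]_n) :
  asm_edge A A' -> beta A' - beta A = 1 -> saturated_path A' B -> saturated_path A B.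
Proof.
move=> eA bA [k [P [P0 Pk HP]]].
exists k.+1, (fun m => if m is m'.+1 then P m' else A); split=> //.
by case=> [|m] hm; [rewrite P0 | exact: HP].
Qed.

Lemma saturated_path_below n (A B : 'M[int]_n) :
  is_ASM A -> is_ASM B -> csum_below B A -> saturated_path A B.
Proof.
move=> aA aB le.
suff gap_lt k : forall A, is_ASM A -> csum_below B A -> csum_gap A B < k%:Z ->
    saturated_path A B.
  by apply: (gap_lt (absz (csum_gap A B)).+1) => //; rewrite -addn1 PoszD
    gez0_abs ?csum_gap_ge0 // ltrDl.
elim: k => [|k IH] {}A {}aA {}le lt; first by have := csum_gap_ge0 le; lia.
case: (eq_or_strict_cell le) => [-> | [i [j [hi hj ltij]]]].
  exact: saturated_path_refl.
have [p [q [hp hq ltpq cA]]] :=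
  exists_corner (csum_corner_fun aA) (csum_corner_fun aB) hi hj ltij.
have [le' gap'] := remove_corner_below aA hp hq cA ltpq le.
apply: (saturated_path_cons (asm_edge_remove_corner aA hp hq cA)).
  by rewrite beta_remove_corner //; ring.
apply: IH; [exact: remove_corner_ASM | exact: le' |].
by rewrite gap'; move: lt; rewrite -addn1 PoszD; lia.
Qed.

(* For parameters x, y, a (all 0-based)
   bigr_shape x y a is the permutation of [0, n) that fixes [0, a), sends the
   block [a, x] increasingly onto [y + 1, x + y + 1 - a] and the next block
   [x + 1, x + y + 1 - a] increasingly onto [a, y], and fixes the rest.  Its
   only descent is at x and the only descent of its inverse is at y. *)
Definition bigr_shape (x y a r : nat) : nat :=
  if (r < a)%N then r else if (r <= x)%N then (r + y + 1 - a)%N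
  else if (r <= x + y + 1 - a)%N then (r - (x + 1 - a))%N else r.

(* The admissible parameters: both moved blocks are nonempty and fit in n. *)
Definition bigr_param n (x y a : nat) : bool :=
  [&& (a <= x)%N, (a <= y)%N & (x + y + 2 <= n + a)%N].

Ltac shape_lia := rewrite /bigr_shape; repeat (case: ifP => ?); lia.

Lemma bigr_param_sym n x y a : bigr_param n x y a = bigr_param n y x a.
Proof. by rewrite /bigr_param; apply/and3P/and3P => -[h1 h2 h3]; split => //; lia. Qed.

Lemma bigr_shape_lt n x y a r : bigr_param n x y a -> (r < n)%N ->
  (bigr_shape x y a r < n)%N.
Proof. move=> /and3P[h1 h2 h3] hr; shape_lia. Qed.

Lemma bigr_shapeK n x y a r : bigr_param n x y a -> (r < n)%N ->
  bigr_shape y x a (bigr_shape x y a r) = r.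
Proof.
move=> /and3P[h1 h2 h3] hr; rewrite {2}/bigr_shape.
case: (ltnP r a) => h4 /=; [|case: (leqP r x) => h5 /=; [|case: leqP => h6 /=]];
  shape_lia.
Qed.

Lemma bigr_shape_desc n x y a r : bigr_param n x y a -> (r.+1 < n)%N ->
  (bigr_shape x y a r.+1 < bigr_shape x y a r)%N = (r == x).
Proof. move=> /and3P[h1 h2 h3] hr; apply/idP/eqP; shape_lia. Qed.

Lemma bigr_shape_low n x y a v : bigr_param n x y a -> (v < n)%N ->
  (bigr_shape y x a v <= x)%N = (v < a)%N || (y < v < x + y + 2 - a)%N.
Proof. move=> /and3P[h1 h2 h3] hv; apply/idP/idP; shape_lia. Qed.

(* bigr_shape as a permutation of 'I_n (the identity for inadmissible
   parameters). *)
Definition bigr_fun n x y a (i : 'I_n) : 'I_n :=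
  if bigr_param n x y a then insubd i (bigr_shape x y a i) else i.

Lemma bigr_fun_inj n x y a : injective (@bigr_fun n x y a).
Proof.
move=> i j; rewrite /bigr_fun; case: ifP => v // e; apply: ord_inj.
have := congr1 val e; rewrite !val_insubd !(bigr_shape_lt v (ltn_ord _)) => e'.
by rewrite -(bigr_shapeK v (ltn_ord i)) e' (bigr_shapeK v (ltn_ord j)).
Qed.

Definition bigr_perm n x y a : 'S_n := perm (@bigr_fun_inj n x y a).

Lemma bigr_permE n x y a (i : 'I_n) : bigr_param n x y a ->
  bigr_perm n x y a i = bigr_shape x y a i :> nat.
Proof.
by move=> v; rewrite permE /bigr_fun v val_insubd (bigr_shape_lt v (ltn_ord _)).
Qed.

Lemma bigr_permV n x y a : bigr_param n x y a ->
  (bigr_perm n x y a)^-1%g = bigr_perm n y x a.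
Proof.
move=> v; have v' : bigr_param n y x a by rewrite -bigr_param_sym.
apply/permP => i; apply: (@perm_inj _ (bigr_perm n x y a)); rewrite permKV.
by apply: val_inj; rewrite /= bigr_permE // bigr_permE // (bigr_shapeK v' (ltn_ord _)).
Qed.

Definition pval n (w : 'S_n) (r : nat) : nat :=
  if insub r is Some i then nat_of_ord (w i) else r.

Lemma pvalE n (w : 'S_n) (i : 'I_n) : pval w i = w i.
Proof. by rewrite /pval valK. Qed.

Lemma pval_lt n (w : 'S_n) r : (r < n)%N -> (pval w r < n)%N.
Proof. by move=> hr; rewrite -[r]/(nat_of_ord (Ordinal hr)) pvalE. Qed.

Lemma pvalK n (w : 'S_n) r : (r < n)%N -> pval w^-1 (pval w r) = r.
Proof. by move=> hr; rewrite -[r]/(nat_of_ord (Ordinal hr)) !pvalE permK. Qed.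

Lemma pvalKV n (w : 'S_n) r : (r < n)%N -> pval w (pval w^-1 r) = r.
Proof. by move=> hr; rewrite -[r]/(nat_of_ord (Ordinal hr)) !pvalE permKV. Qed.

Lemma pval_inj n (w : 'S_n) r s : (r < n)%N -> (s < n)%N -> pval w r = pval w s -> r = s.
Proof. by move=> hr hs e; rewrite -(pvalK w hr) e pvalK. Qed.

Definition descent n (w : 'S_n) (r : nat) : bool :=
  (r.+1 < n)%N && (pval w r.+1 < pval w r)%N.

Lemma bigr_perm_pval n x y a r : bigr_param n x y a -> (r < n)%N ->
  pval (bigr_perm n x y a) r = bigr_shape x y a r.
Proof. by move=> v hr; rewrite -[r]/(nat_of_ord (Ordinal hr)) pvalE bigr_permE. Qed.

Lemma ndes1P n (w : 'S_n) : ndes w = 1%N <-> exists d, forall r, descent w r = (r == d).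
Proof.
have mem (j : 'I_n) : j \in [set j : 'I_n | [exists j' : 'I_n,
    (j' == j.+1 :> nat) && (w j' < w j)%N]] = descent w j.
  rewrite inE /descent; apply/existsP/andP => [[j' /andP[/eqP e h]]|[h1 h2]].
    by rewrite -e ltn_ord !pvalE.
  by exists (Ordinal h1); rewrite eqxx -(pvalE w (Ordinal h1)) -pvalE.
rewrite /ndes; split=> [/eqP/cards1P [d /setP ed] | [d hd]].
  exists (val d) => r; apply/idP/eqP => [hr | ->]; last by rewrite -mem ed inE.
  have hrn : (r < n)%N by case/andP: hr => /ltnW.
  by have := ed (Ordinal hrn); rewrite mem hr inE => /esym/eqP <-.
have hdn : (d < n)%N by have := hd d; rewrite eqxx => /andP[/ltnW].
apply/eqP/cards1P; exists (Ordinal hdn); apply/setP => j.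
by rewrite mem hd inE -val_eqE.
Qed.

Lemma bigr_perm_descent n x y a r : bigr_param n x y a ->
  descent (bigr_perm n x y a) r = (r == x).
Proof.
move=> v; rewrite /descent; case: ltnP => hr /=.
  by rewrite !bigr_perm_pval ?(bigr_shape_desc v) // ltnW.
by apply/esym/eqP => erx; move: v hr; rewrite erx /bigr_param; lia.
Qed.

Lemma bigr_perm_bigr n x y a : bigr_param n x y a -> bigrassmannian (bigr_perm n x y a).
Proof.
move=> v; have v' : bigr_param n y x a by rewrite -bigr_param_sym.
rewrite /bigrassmannian bigr_permV //.
apply/andP; split; apply/eqP/ndes1P; [exists x | exists y] => r.
  by rewrite bigr_perm_descent.
by rewrite bigr_perm_descent.
Qed.

Lemma one_descent_incr n (w : 'S_n) d : (forall r, descent w r -> r = d) ->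
  forall r s, (r < s < n)%N -> (s <= d)%N || (d < r)%N -> (pval w r < pval w s)%N.
Proof.
move=> hd r; elim=> // s IH /andP[hrs hs] blk.
have step : (pval w s < pval w s.+1)%N.
  have ns : s <> d by move=> esd; move: blk hrs; rewrite esd; lia.
  have := hd s; rewrite /descent hs /= => /contra_not/(_ ns)/negP; rewrite -leqNgt.
  rewrite leq_eqVlt => /orP[/eqP/(pval_inj (ltnW hs) hs)|//]; lia.
move: hrs; rewrite ltnS leq_eqVlt => /orP[/eqP-> //|hrs].
by have := IH; rewrite hrs (ltnW hs) => /(_ isT); lia.
Qed.

Lemma incr_map_eq n (s : seq 'I_n) (f g : 'I_n -> 'I_n) :
  sorted (fun i j : 'I_n => (i < j)%N) s ->
  {in s &, {homo f : i j / (i < j)%N}} -> {in s &, {homo g : i j / (i < j)%N}} ->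
  map f s =i map g s -> {in s, f =1 g}.
Proof.
move=> ss fs gs img i si.
have ltr_trans : transitive (fun i j : 'I_n => (i < j)%N) by move=> ???; apply: ltn_trans.
have ltr_irr : irreflexive (fun i j : 'I_n => (i < j)%N) by move=> ?; apply: ltnn.
have eqm : map f s = map g s.
  by apply: (irr_sorted_eq ltr_trans ltr_irr) img; apply: homo_sorted_in (allss s) ss.
have hi : (index i s < size s)%N by rewrite index_mem.
by rewrite -{1}(nth_index i si) -(nth_map i (f i)) // eqm (nth_map i) ?nth_index.
Qed.

Lemma perm_two_blocks_eq n d (w1 w2 : 'S_n) :
  (forall r, descent w1 r -> r = d) -> (forall r, descent w2 r -> r = d) ->
  (forall v : 'I_n, ((w1^-1)%g v <= d)%N = ((w2^-1)%g v <= d)%N) -> w1 = w2.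
Proof.
move=> d1 d2 blk.
have enum_sorted : sorted (fun i j : 'I_n => (i < j)%N) (enum 'I_n).
  by have := iota_ltn_sorted 0 n; rewrite -val_enum_ord sorted_map.
have mem_block (b : bool) (w : 'S_n) (v : 'I_n) :
    (v \in [seq w i | i <- [seq i <- enum 'I_n | (nat_of_ord i <= d)%N == b]]) =
    (((w^-1)%g v <= d)%N == b).
  by rewrite -{1}(permKV w v) (mem_map (@perm_inj _ w)) mem_filter mem_enum andbT.
have on_block (b : bool) : {in [seq i <- enum 'I_n | (nat_of_ord i <= d)%N == b], w1 =1 w2}.
  have incr (w : 'S_n) : (forall r, descent w r -> r = d) ->
      {in [seq i <- enum 'I_n | (nat_of_ord i <= d)%N == b] &, {homo w : i j / (i < j)%N}}.
    move=> dw i j; rewrite !mem_filter => /andP[/eqP bi _] /andP[/eqP bj _] lt.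
    rewrite -!pvalE (one_descent_incr dw) //; first by rewrite lt ltn_ord.
    by case: b bi bj => bi bj; lia.
  apply: incr_map_eq; [|exact: incr|exact: incr|].
    by apply: sorted_filter enum_sorted => ???; apply: ltn_trans.
  by move=> v; rewrite !mem_block blk.
apply/permP => i; apply: (on_block (i <= d)%N).
by rewrite mem_filter eqxx mem_enum.
Qed.

Lemma ascent_between (S : nat -> bool) u v : ~~ S u -> S v -> (u < v)%N ->
  exists2 t, (u <= t < v)%N & ~~ S t && S t.+1.
Proof.
move=> Su; elim: v => // v IH Sv; rewrite ltnS leq_eqVlt => /orP[/eqP euv|uv].
  by subst u; exists v; rewrite ?leqnn // Su Sv.
case: (boolP (S v)) => [/IH/(_ uv) [t ht tS] | nSv]; last first.
  by exists v; [rewrite (ltnW uv) /= | rewrite nSv Sv].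
by exists t => //; case/andP: ht => -> /ltnW; rewrite ltnS.
Qed.

Lemma one_ascent_shape n e (S : nat -> bool) : (e.+1 < n)%N ->
  (forall v, (v.+1 < n)%N -> ~~ S v && S v.+1 = (v == e)) ->
  exists a c, [/\ (a <= e)%N, (e.+1 < c <= n)%N &
                  forall v, (v < n)%N -> S v = (v < a)%N || (e < v < c)%N].
Proof.
move=> hen asc.
have /andP[nSe Se1] : ~~ S e && S e.+1 by rewrite asc // eqxx.
have only_e t : (t.+1 < n)%N -> ~~ S t && S t.+1 -> t = e.
  by move=> ht; rewrite asc // => /eqP.
have exA : exists v, ~~ S v by exists e.
case: (ex_minnP exA) => a nSa minA.
have exC : exists v, (e < v)%N && ((n <= v)%N || ~~ S v) by exists n; rewrite leqnn; lia.
case: (ex_minnP exC) => c /andP[ec hc] minC.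
have ae : (a <= e)%N by apply: minA.
have cn : (c <= n)%N by apply: minC; rewrite leqnn /= andbT; lia.
have e1c : (e.+1 < c)%N.
  rewrite ltn_neqAle ec andbT; apply/eqP => ce; move: hc; rewrite -ce Se1 orbF.
  by rewrite leqNgt hen.
have no_ascent t u v : (e < t)%N || (v <= e)%N -> (t <= u)%N -> (u <= v)%N ->
    (v < n)%N -> ~~ S u -> ~~ S v.
  move=> et tu; rewrite leq_eqVlt => /orP[/eqP-> // | uv] vn nSu; apply/negP => Sv.
  have [t' /andP[ut' t'v] asc'] := ascent_between nSu Sv uv.
  have := only_e t' (leq_ltn_trans t'v vn) asc'; lia.
exists a, c; split=> [||v hv]; rewrite ?e1c //; apply/idP/idP => [Sv | ].
- case: (ltnP v a) => //= av; case: (leqP v e) => [ve | ev] /=.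
  by have := no_ascent a a v; rewrite ve orbT leqnn av hv Sv => /(_ isT isT isT isT nSa).
  rewrite ltnNge; apply/negP => cv.
  have nSc : ~~ S c by move: hc; rewrite leqNgt (leq_ltn_trans cv hv).
  by have := no_ascent c c v; rewrite ec leqnn cv hv Sv => /(_ isT isT isT isT nSc).
- by case/orP=> [va | /andP[ev vc]]; apply: contraT;
    [move/minA; rewrite leqNgt va | move=> nSv; have := minC v;
     rewrite ev nSv orbT leqNgt vc => /(_ isT)].
Qed.

Lemma inv_descent n (w : 'S_n) d : (forall r, descent w r -> r = d) ->
  forall v, (v.+1 < n)%N ->
  descent w^-1 v = ~~ (pval w^-1 v <= d)%N && (pval w^-1 v.+1 <= d)%N.
Proof.
move=> hd v hv; rewrite /descent hv /=.
have hi := pval_lt w^-1 (ltnW hv); have hj := pval_lt w^-1 hv.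
have incr := one_descent_incr hd.
have := incr (pval w^-1 v.+1) (pval w^-1 v); have := incr (pval w^-1 v) (pval w^-1 v.+1).
rewrite !pvalKV ?(ltnW hv) //.
have : pval w^-1 v <> pval w^-1 v.+1 by move/(pval_inj (ltnW hv) hv); lia.
lia.
Qed.

Lemma card_ord_sum n (P : pred nat) :
  #|[set i : 'I_n | P i]| = (\sum_(i < n) (P i : nat))%N.
Proof.
by rewrite -sum1_card big_mkcond /=; apply: eq_bigr => i _; rewrite inE; case: (P i).
Qed.

Lemma sum_interval N L U : (\sum_(i < N) ((L <= i < U)%N : nat) = minn U N - L)%N.
Proof.
elim: N => [|N IH]; first by rewrite big_ord0 minn0.
by rewrite big_ord_recr /= IH; case: (boolP (L <= N < U)%N) => h /=; lia.
Qed.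

Lemma card_low_block n (w : 'S_n) d : (d < n)%N ->
  #|[set v : 'I_n | (pval w^-1 v <= d)%N]| = d.+1.
Proof.
move=> hd; have -> : [set v : 'I_n | (pval w^-1 v <= d)%N] =
    (w^-1)%g @^-1: [set i : 'I_n | (i < d.+1)%N].
  by apply/setP => v; rewrite !inE pvalE.
rewrite card_preimset; last exact: perm_inj.
rewrite (@card_ord_sum n (fun i => i < d.+1)%N).
by rewrite (eq_bigr (fun i : 'I_n => (0 <= i < d.+1)%N : nat)) // sum_interval; lia.
Qed.

Lemma card_two_intervals n a e c : (a <= e)%N -> (e < c <= n)%N ->
  #|[set v : 'I_n | (v < a)%N || (e < v < c)%N]| = (a + (c - e.+1))%N.
Proof.
move=> ae cn; rewrite (@card_ord_sum n (fun v => (v < a) || (e < v < c))%N).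
rewrite (eq_bigr (fun i : 'I_n => (0 <= i < a)%N + (e.+1 <= i < c)%N)%N); last first.
  by move=> i _; case: (ltnP i a) => ia; case: (ltnP e i) => ei /=; lia.
by rewrite big_split !sum_interval /=; lia.
Qed.

(* Every bigrassmannian permutation is some bigr_perm n x y a: x and y are
   its descent and inverse descent, and its first block of values has the
   shape [0, a) u (y, x + y + 2 - a) by one_ascent_shape. *)
Lemma bigr_perm_surj n (w : 'S_n) : bigrassmannian w ->
  exists x y a, bigr_param n x y a /\ w = bigr_perm n x y a.
Proof.
case/andP => /eqP/ndes1P [d hd] /eqP/ndes1P [e he].
have hdn : (d.+1 < n)%N by have := hd d; rewrite eqxx => /andP[].
have hen : (e.+1 < n)%N by have := he e; rewrite eqxx => /andP[].
have hd' r : descent w r -> r = d by rewrite hd => /eqP.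
pose S v := (pval w^-1 v <= d)%N.
have [a [c [ae /andP[e1c cn] hS]]] : exists a c, [/\ (a <= e)%N, (e.+1 < c <= n)%N &
    forall v, (v < n)%N -> S v = (v < a)%N || (e < v < c)%N].
  by apply: one_ascent_shape => // v hv; rewrite -he (inv_descent hd').
have card : d.+1 = (a + (c - e.+1))%N.
  have ecn : (e < c <= n)%N by rewrite (ltnW e1c) cn.
  rewrite -(card_low_block w (ltnW hdn)) -(card_two_intervals (n := n) ae ecn).
  by apply: eq_card => v; rewrite !inE -hS.
have v : bigr_param n d e a by rewrite /bigr_param; lia.
exists d, e, a; split=> //; apply: (@perm_two_blocks_eq n d) => // [r | u].
  by rewrite bigr_perm_descent // => /eqP.
have v' : bigr_param n e d a by rewrite -bigr_param_sym.
rewrite bigr_permV // -!pvalE bigr_perm_pval // (bigr_shape_low v) //.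
by rewrite -/(S u) hS //; congr (_ || (_ && _)); lia.
Qed.

Definition bigr_csum (x y a p q : nat) : nat :=
  minn p (minn q (a + (p - x.+1) + (q - y.+1))).

Lemma bigr_csumS n x y a r c : bigr_param n x y a -> (r < n)%N -> (c <= n)%N ->
  (bigr_csum x y a r.+1 c = bigr_csum x y a r c + (bigr_shape x y a r < c))%N.
Proof.
move=> /and3P[h1 h2 h3] hr hc; rewrite /bigr_csum /bigr_shape.
by case: ifP => ?; [|case: ifP => ?; [|case: ifP => ?]]; case: ltnP => ?; lia.
Qed.

Lemma perm_row_prefix n (s : 'S_n) (i : 'I_n) q :
  \sum_(j < n | (j < q)%N) (perm_mx s : 'M[int]_n) i j = ((s i < q)%N : nat)%:R.
Proof.
under eq_bigr do rewrite perm_mxEsub !mxE.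
case: (ltnP (s i) q) => h.
  rewrite (bigD1 (s i)) //= eqxx big1 ?addr0 // => j /andP[_ ne].
  by rewrite eq_sym (negbTE ne).
by apply: big1 => j hj; case: eqP => // ej; move: hj; rewrite -ej ltnNge h.
Qed.

Lemma csum_bigr_perm n x y a p q : bigr_param n x y a -> (p <= n)%N -> (q <= n)%N ->
  csum (perm_mx (bigr_perm n x y a)) p q = (bigr_csum x y a p q)%:Z.
Proof.
move=> v; elim: p => [|p IH] hp hq; first by rewrite csum0l /bigr_csum min0n.
rewrite (csum_rowS _ (Ordinal hp)) perm_row_prefix IH ?(ltnW hp) //.
by rewrite (bigr_csumS v hp hq) bigr_permE // PoszD natz.
Qed.

(* The parameters are recovered from the permutation: x and y as the
   descents of it and of its inverse, a as its corner sum at (x + 1, y + 1). *)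
Lemma bigr_perm_inj n x1 y1 a1 x2 y2 a2 :
  bigr_param n x1 y1 a1 -> bigr_param n x2 y2 a2 ->
  bigr_perm n x1 y1 a1 = bigr_perm n x2 y2 a2 -> [/\ x1 = x2, y1 = y2 & a1 = a2].
Proof.
move=> v1 v2 e.
have ex : x1 = x2.
  by apply/eqP; rewrite eq_sym -(bigr_perm_descent x2 v1) e (bigr_perm_descent x2 v2).
have ey : y1 = y2.
  have v1' : bigr_param n y1 x1 a1 by rewrite -bigr_param_sym.
  have v2' : bigr_param n y2 x2 a2 by rewrite -bigr_param_sym.
  apply/eqP; rewrite eq_sym -(bigr_perm_descent y2 v1') -(bigr_permV v1) e.
  by rewrite (bigr_permV v2) (bigr_perm_descent y2 v2').
subst x2 y2; split=> //.
have [hx hy] : (x1.+1 <= n)%N /\ (y1.+1 <= n)%N by case/and3P: v1; lia.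
have := csum_bigr_perm v1 hx hy; rewrite e (csum_bigr_perm v2 hx hy) /bigr_csum.
by case/and3P: v1 => *; case/and3P: v2 => *; lia.
Qed.

Lemma corner_fun_dominated n C i j x y : corner_fun n C ->
  (i <= n)%N -> (j <= n)%N -> (x <= n)%N -> (y <= n)%N ->
  C i j <= C x y + (i - x)%N%:Z + (j - y)%N%:Z.
Proof.
move=> vC hi hj hx hy.
set I := maxn i x; set J := maxn j y.
have hI : (I <= n)%N by rewrite geq_max hi hx.
have hJ : (J <= n)%N by rewrite geq_max hj hy.
have := @corner_fun_row_lip n C i (I - i) j vC; rewrite subnKC ?leq_maxl // => /(_ hI hj).
have := @corner_fun_col_lip n C I j (J - j) vC; rewrite subnKC ?leq_maxl // => /(_ hI hJ).
have := @corner_fun_row_lip n C x (I - x) J vC; rewrite subnKC ?leq_maxr // => /(_ hI hJ).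
have := @corner_fun_col_lip n C x y (J - y) vC; rewrite subnKC ?leq_maxr // => /(_ hx hJ).
rewrite /I /J; lia.
Qed.

Lemma bigr_perm_le n x y a (A : 'M[int]_n) : is_ASM A -> bigr_param n x y a ->
  asm_le (perm_mx (bigr_perm n x y a)) A = (csum A x.+1 y.+1 <= a%:Z).
Proof.
move=> aA v; have vA := csum_corner_fun aA.
have [hx hy] : (x.+1 <= n)%N /\ (y.+1 <= n)%N by case/and3P: v; lia.
apply/idP/idP => [/asm_leP H | H]; last apply/asm_leP => i j hi hj.
  have := H _ _ hx hy; rewrite csum_bigr_perm // /bigr_csum.
  by case/and3P: v => *; lia.
rewrite csum_bigr_perm // /bigr_csum.
have [_ b1 b2 _] := corner_fun_bounds vA hi hj.
have := corner_fun_dominated vA hi hj hx hy; lia.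
Qed.

Lemma Posz_sum (I : finType) (f : I -> nat) : (\sum_i f i)%N%:Z = \sum_i (f i)%:Z.
Proof. by rewrite -natz natr_sum; apply: eq_bigr => i _; rewrite natz. Qed.

Lemma count_params n (A : 'M[int]_n) (x y : 'I_n) : is_ASM A ->
  (\sum_(a < n) ((bigr_param n x y a && (csum A x.+1 y.+1 <= a%:Z)%R) : nat))%N%:Z =
  (minn x.+1 y.+1)%:Z - csum A x.+1 y.+1.
Proof.
move=> aA.
have [b0 b1 b2 b3] := corner_fun_bounds (csum_corner_fun aA) (ltn_ord x) (ltn_ord y).
have [c ec] : exists c : nat, csum A x.+1 y.+1 = c%:Z.
  by exists (absz (csum A x.+1 y.+1)); rewrite abszE ger0_norm.
rewrite ec in b0 b1 b2 b3 *.
rewrite (eq_bigr (fun a : 'I_n =>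
  (maxn c (x.+1 + y.+1 - n) <= a < minn x.+1 y.+1)%N : nat)).
  by rewrite sum_interval; lia.
by move=> a _; rewrite lez_nat; congr nat_of_bool; rewrite /bigr_param; apply/idP/idP; lia.
Qed.

Definition bigr_params n : {set 'I_n * 'I_n * 'I_n} :=
  [set t : 'I_n * 'I_n * 'I_n | bigr_param n t.1.1 t.1.2 t.2].

Definition bigr_of n (t : 'I_n * 'I_n * 'I_n) : 'S_n := bigr_perm n t.1.1 t.1.2 t.2.

Lemma bigr_set n : [set w : 'S_n | bigrassmannian w] = @bigr_of n @: bigr_params n.
Proof.
apply/setP => w; rewrite inE; apply/idP/imsetP => [/bigr_perm_surj [x [y [a [v ->]]]] |].
  have [hx [hy ha]] : (x < n /\ y < n /\ a < n)%N by case/and3P: v; lia.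
  by exists (Ordinal hx, Ordinal hy, Ordinal ha); rewrite // inE.
by move=> [t]; rewrite inE => v ->; apply: bigr_perm_bigr.
Qed.

Lemma bigr_of_inj n : {in bigr_params n &, injective (@bigr_of n)}.
Proof.
move=> [[x1 y1] a1] [[x2 y2] a2]; rewrite !inE /= => v1 v2 e.
by have [e1 e2 e3] := bigr_perm_inj v1 v2 e; congr (_, _, _); apply: ord_inj.
Qed.

Lemma card_bigr_below n (A : 'M[int]_n) : is_ASM A ->
  (#|[set w : 'S_n | bigrassmannian w && asm_le (perm_mx w) A]|)%:Z =
  \sum_(x < n) \sum_(y < n) ((minn x.+1 y.+1)%:Z - csum A x.+1 y.+1).
Proof.
move=> aA.
have -> : #|[set w : 'S_n | bigrassmannian w && asm_le (perm_mx w) A]| =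
    (\sum_(w in [set w : 'S_n | bigrassmannian w]) (asm_le (perm_mx w) A : nat))%N.
  rewrite -sum1_card big_mkcond [RHS]big_mkcond /=; apply: eq_bigr => w _.
  by rewrite !inE; case: bigrassmannian; case: asm_le.
rewrite bigr_set (big_imset _ (@bigr_of_inj n)) /=.
transitivity ((\sum_(xy : 'I_n * 'I_n) \sum_(a < n)
   ((bigr_param n xy.1 xy.2 a && (csum A xy.1.+1 xy.2.+1 <= a%:Z)%R) : nat))%N%:Z).
  congr Posz; rewrite pair_bigA big_mkcond; apply: eq_bigr => -[[x y] a] _ /=.
  by rewrite inE /=; case: ifP => // v; rewrite bigr_perm_le.
rewrite -(pair_bigA _ (fun x y : 'I_n => \sum_(a < n)
   ((bigr_param n x y a && (csum A x.+1 y.+1 <= a%:Z)%R) : nat))%N) /=.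
rewrite Posz_sum; apply: eq_bigr => x _; rewrite Posz_sum; apply: eq_bigr => y _.
exact: count_params.
Qed.

Theorem mainTheorem9 (n : nat) :
  (forall A B : 'M[int]_n, is_ASM A -> is_ASM B -> asm_le A B ->
     exists (k : nat) (P : nat -> 'M[int]_n),
       [/\ P 0%N = A, P k = B &
           forall m : nat, (m < k)%N ->
             asm_edge (P m) (P m.+1) /\ beta (P m.+1) - beta (P m) = 1]) /\
  (forall A : 'M[int]_n, is_ASM A ->
     beta A = (#|[set w : 'S_n | bigrassmannian w && asm_le (perm_mx w) A]|)%:Z).
Proof.
split=> [A B aA aB /asm_leP le | A aA].
  exact: saturated_path_below.
rewrite card_bigr_below // /beta -sumrB; apply: eq_bigr => i _.
by rewrite -sumrB.
Qed.
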